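(* Let $G$ be a connected finite graph without a cut-vertex, let $\mathcal{L}$ be a degree-list assignment for $G$, and let $g$ be a partial proper $\mathcal{L}$-coloring of $G$. If $G$ has no proper $\mathcal{L}$-coloring $f$ with $|f^{-1}(\alpha)|\geq|g^{-1}(\alpha)|$ for all colors $\alpha$, then all the lists $\mathcal{L}(x)$, $x\in V(G)$, are equal.
   Context: A cut-vertex of a connected graph $G$ is a vertex $x$ with $G-x$ disconnected. A list assignment assigns to each vertex $x$ a set $\mathcal{L}(x)$; it is a degree-list assignment if $|\mathcal{L}(x)|\geq\deg_G(x)$ for all $x$. A (partial) $\mathcal{L}$-coloring is a function $f$ with domain $V(G)$ (resp. a subset of $V(G)$) and $f(x)\in\mathcal{L}(x)$; it is proper if adjacent vertices in its domain get different colors. *)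

From mathcomp Require Import all_boot.
Set Implicit Arguments. Unset Strict Implicit. Unset Printing Implicit Defensive.

(* A finite simple graph: vertex set T (finType), adjacency e : rel T,
   assumed symmetric and irreflexive (hypotheses of the theorem). *)

Definition deg (T : finType) (e : rel T) (x : T) : nat := #|[set y | e x y]|.

Definition connected_graph (T : finType) (e : rel T) : Prop :=
  forall y z : T, connect e y z.

Definition del_vertex (T : finType) (e : rel T) (x : T) : rel T :=
  [rel u v | [&& e u v, u != x & v != x]].

Definition cut_vertex (T : finType) (e : rel T) (x : T) : Prop :=
  exists y z : T, [/\ y != x, z != x & ~~ connect (del_vertex e x) y z].

Definition degree_list_assignment (T C : finType) (e : rel T)
  (L : T -> {set C}) : Prop :=
  forall x, deg e x <= #|L x|.

Definition L_coloring (T C : finType) (L : T -> {set C}) (f : T -> C) : Prop :=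
  forall x, f x \in L x.

Definition proper_coloring (T C : finType) (e : rel T) (f : T -> C) : Prop :=
  forall x y, e x y -> f x != f y.

Definition partial_L_coloring (T C : finType) (L : T -> {set C})
  (g : T -> option C) : Prop :=
  forall x c, g x = Some c -> c \in L x.

Definition proper_partial_coloring (T C : finType) (e : rel T)
  (g : T -> option C) : Prop :=
  forall x y c d, e x y -> g x = Some c -> g y = Some d -> c != d.

Definition fiber (T C : finType) (f : T -> C) (a : C) : nat := #|[set x | f x == a]|.
Definition pfiber (T C : finType) (g : T -> option C) (a : C) : nat :=
  #|[set x | g x == Some a]|.

From mathcomp Require Import all_boot.
From mathcomp Require Import perm.

Set Implicit Arguments. Unset Strict Implicit. Unset Printing Implicit Defensive.

(* Call a partial proper L-coloring h
   dominating if every colour class of h is at least as large as that of g;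
   its uncoloured vertices are "tokens".  Suppose two adjacent lists differ,
   say c \in L x and c \notin L y with xy an edge; we show by strong
   induction on the number n of tokens that no dominating coloring exists,
   contradicting that g itself is dominating.
   If no dominating coloring has fewer than n tokens, then in one with n
   tokens every uncoloured vertex u is saturated: each colour of L u occurs
   on a neighbour (otherwise colour u).  Since deg u <= |L u|, the colours
   of the neighbours of u are then exactly L u, each occurring once, so the
   token may be swapped with any neighbour w: give u the colour of w and
   uncolour w.  Hence tokens travel along paths.  Move a token to x, swap it
   to the neighbour z of x coloured c (z <> y as c \notin L y), then, since x
   is not a cut vertex, walk it from z to y avoiding x.  Now y is saturated
   while its neighbour x has colour c, forcing c \in L y: contradiction.
   Finally adjacent vertices have equal lists, hence so do all vertices. *)

Section TokenMoves.

Variables (T C : finType) (e : rel T).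
Hypothesis e_sym : symmetric e.
Hypothesis e_irr : irreflexive e.
Variable L : T -> {set C}.
Hypothesis L_deg : degree_list_assignment e L.
Variable g : T -> option C.

Definition nbhd (u : T) : {set T} := [set y | e u y].

Definition uncolored (h : T -> option C) : {set T} := [set t | h t == None].

Definition dominating (h : T -> option C) : Prop :=
  [/\ partial_L_coloring L h, proper_partial_coloring e h &
      forall a, pfiber g a <= pfiber h a].

Definition saturated (h : T -> option C) (u : T) : Prop :=
  forall c, c \in L u -> exists2 w, e u w & h w = Some c.

Definition swap_token (h : T -> option C) (u w : T) : T -> option C :=
  fun t => h (tperm u w t).

Lemma swap_tokenL h u w : swap_token h u w u = h w.
Proof. by rewrite /swap_token tpermL. Qed.

Lemma swap_tokenR h u w : swap_token h u w w = h u.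
Proof. by rewrite /swap_token tpermR. Qed.

Lemma swap_tokenD h u w t : t != u -> t != w -> swap_token h u w t = h t.
Proof. by move=> tu tw; rewrite /swap_token tpermD // eq_sym. Qed.

Definition extend (h : T -> option C) (u : T) (c : C) : T -> option C :=
  fun t => if t == u then Some c else h t.

Lemma saturated_image_sub h u :
  saturated h u -> Some @: L u \subset h @: nbhd u.
Proof.
move=> sat; apply/subsetP => _ /imsetP [c cL ->].
by have [w ew <-] := sat c cL; apply: imset_f; rewrite inE.
Qed.

(* Since deg u <= |L u|, the neighbours of u minus any one of them cannot
   show all colours of L u. *)
Lemma list_not_covered_without h u z :
  z \in nbhd u -> ~ (Some @: L u \subset h @: (nbhd u :\ z)).
Proof.
move=> zN /subset_leq_card; rewrite (card_imset _ (@Some_inj _)) => covered.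
have := leq_trans covered (leq_imset_card _ _).
have := L_deg u; rewrite /deg -/(nbhd u) (cardsD1 z (nbhd u)) zN add1n.
by move=> /leq_trans le /le; rewrite ltnn.
Qed.

Lemma saturated_image h u : saturated h u -> h @: nbhd u = Some @: L u.
Proof.
move=> /saturated_image_sub sub; apply/esym/eqP; rewrite eqEcard sub /=.
rewrite (card_imset _ (@Some_inj _)).
exact: leq_trans (leq_imset_card _ _) (L_deg u).
Qed.

Lemma saturated_neighbour_color h u w c :
  saturated h u -> e u w -> h w = Some c -> c \in L u.
Proof.
move=> /saturated_image img ew hw.
have : h w \in h @: nbhd u by apply: imset_f; rewrite inE.
by rewrite img hw => /imsetP [d dL [->]].
Qed.

Lemma saturated_colors_distinct h u w b c :
  saturated h u -> e u w -> e u b -> w != b ->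
  h w = Some c -> h b = Some c -> False.
Proof.
move=> /saturated_image_sub sub ew eb wb hw hb.
apply: (@list_not_covered_without h u b); first by rewrite inE.
apply/subsetP => o /(subsetP sub) /imsetP [v vN ->].
have [->|vb] := eqVneq v b; first by rewrite hb -hw imset_f // !inE wb ew.
by rewrite imset_f // in_setD1 vb.
Qed.

Lemma card_levels_perm (h : T -> option C) (s : {perm T})
    (P : pred (option C)) :
  #|[set t | P (h (s t))]| = #|[set t | P (h t)]|.
Proof.
rewrite -(card_preimset [set t | P (h t)] (@perm_inj _ s)).
by apply: eq_card => t; rewrite !inE.
Qed.

Lemma uncolored_swap h u w :
  #|uncolored (swap_token h u w)| = #|uncolored h|.
Proof. exact: (card_levels_perm h (tperm u w) (pred1 None)). Qed.

Lemma swap_dominating h u w c :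
  dominating h -> saturated h u -> h u = None -> e u w -> h w = Some c ->
  dominating (swap_token h u w).
Proof.
move=> [hcol hpr hfib] sat hu euw hw.
set h1 := swap_token h u w.
have h1u : h1 u = Some c by rewrite /h1 swap_tokenL.
have h1w : h1 w = None by rewrite /h1 swap_tokenR.
have h1t t : t != u -> t != w -> h1 t = h t by apply: swap_tokenD.
have proper_at_u b d : e u b -> h1 b = Some d -> c != d.
  move=> eub; have [->|bw] := eqVneq b w; first by rewrite h1w.
  have bu : b != u by apply: contraTneq eub => ->; rewrite e_irr.
  rewrite h1t // => hb; apply/eqP => cd; rewrite -cd in hb.
  by apply: (saturated_colors_distinct sat euw eub _ hw hb); rewrite eq_sym.
split.
- move=> t d; have [->|tu] := eqVneq t u.
    by rewrite h1u => -[<-]; apply: saturated_neighbour_color sat euw hw.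
  have [->|tw] := eqVneq t w; first by rewrite h1w.
  by rewrite h1t //; apply: hcol.
- move=> a b d1 d2.
  have [-> eub | au] := eqVneq a u.
    by rewrite h1u => -[<-]; apply: proper_at_u.
  have [-> | bu] := eqVneq b u.
    by rewrite h1u e_sym => eua ha [<-]; rewrite eq_sym; apply: proper_at_u ha.
  have [-> | aw] := eqVneq a w; first by rewrite h1w.
  have [-> | bw] := eqVneq b w; first by rewrite h1w.
  by rewrite !h1t //; apply: hpr.
- by move=> a; rewrite /pfiber card_levels_perm; apply: hfib.
Qed.

Lemma extend_dominating h u c :
  dominating h -> h u = None -> c \in L u ->
  (forall w, e u w -> h w != Some c) ->
  dominating (extend h u c) /\ #|uncolored (extend h u c)| < #|uncolored h|.
Proof.
move=> [hcol hpr hfib] hu cL free; rewrite /extend; split; first split.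
- by move=> t d; case: eqP => [-> [<-] //|_]; apply: hcol.
- move=> a b d1 d2 eab.
  case: eqP => [au [<-]|au]; case: eqP => [bu|bu].
  + by move: eab; rewrite au bu e_irr.
  + move=> hb; apply: contra_neq (free b _); last by rewrite -au.
    by move=> ->; rewrite hb.
  + move=> ha [<-]; apply: contra_neq (free a _); last by rewrite e_sym -bu.
    by move=> <-; rewrite ha.
  + exact: hpr.
- move=> a; apply: leq_trans (hfib a) (subset_leq_card _).
  by apply/subsetP => t; rewrite !inE; have [->|//] := eqVneq t u; rewrite hu.
- apply: proper_card; rewrite properE; apply/andP; split.
    by apply/subsetP => t; rewrite !inE; case: ifP.
  by apply/subsetPn; exists u; rewrite !inE ?hu ?eqxx.
Qed.

Lemma del_vertex_path_avoids x z p :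
  z != x -> path (del_vertex e x) z p -> x \notin z :: p.
Proof.
elim: p z => [|w p IH] z zx /=; first by rewrite inE eq_sym.
case/andP=> /and3P [_ _ wx] pw; rewrite in_cons negb_or eq_sym zx.
exact: IH.
Qed.

Hypothesis no_good_coloring : ~ (exists f : T -> C,
  [/\ L_coloring L f, proper_coloring e f & forall a, pfiber g a <= fiber f a]).

(* A dominating coloring with no token would be a good total coloring. *)
Lemma dominating_has_token h : dominating h -> exists u, h u = None.
Proof.
move=> [hcol hpr hfib].
case: (pickP (fun t => h t == None)) => [u /eqP hu | none]; first by exists u.
have some t : {c | h t = Some c}.
  by case: (h t) (none t) => [c|//] _; exists c.
case: no_good_coloring; exists (fun t => sval (some t)); split.
- by move=> t; apply: hcol (svalP (some t)).
- by move=> a b eab; apply: hpr eab (svalP (some a)) (svalP (some b)).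
- move=> a; apply: leq_trans (hfib a) (subset_leq_card _).
  apply/subsetP => t; rewrite !inE => /eqP hta; apply/eqP/Some_inj.
  by rewrite -hta; apply: esym (svalP (some t)).
Qed.

Hypothesis G_conn : connected_graph e.
Hypothesis G_nocut : forall x : T, ~ cut_vertex e x.

Section FixedTokenCount.

(* The induction hypothesis: no dominating coloring has fewer than n tokens. *)
Variable n : nat.
Hypothesis fewer_impossible : forall h, #|uncolored h| < n -> ~ dominating h.

Definition minimal (h : T -> option C) : Prop :=
  dominating h /\ #|uncolored h| = n.

Lemma minimal_saturated h u : minimal h -> h u = None -> saturated h u.
Proof.
move=> [dom cnt] hu c cL.
have [/existsP [w /andP [ew /eqP hw]] | /existsPn free] :=
  boolP [exists w, e u w && (h w == Some c)]; first by exists w.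
have absent w : e u w -> h w != Some c by move=> ew; have := free w; rewrite ew.
have [dom' fewer] := extend_dominating dom hu cL absent.
by case: (fewer_impossible _ dom'); rewrite -cnt.
Qed.

Lemma minimal_swap h u w c :
  minimal h -> h u = None -> e u w -> h w = Some c ->
  minimal (swap_token h u w).
Proof.
move=> [dom cnt] hu ew hw; split; last by rewrite uncolored_swap.
exact: swap_dominating (minimal_saturated (conj dom cnt) hu) hu ew hw.
Qed.

Lemma move_token (e' : rel T) : subrel e' e ->
  forall p u h, path e' u p -> minimal h -> h u = None ->
  exists2 h', minimal h' /\ h' (last u p) = None &
              forall t, t \notin u :: p -> h' t = h t.
Proof.
move=> sub; elim=> [|w p IH] u h /=; first by exists h.
case/andP=> euw pw hmin hu.
pose h1 := if h w is Some _ then swap_token h u w else h.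
have [min1 h1w h1off] : [/\ minimal h1, h1 w = None &
                          forall t, t != u -> t != w -> h1 t = h t].
  rewrite /h1; case hw: (h w) => [c|] //; split.
  - exact: minimal_swap hmin hu (sub _ _ euw) hw.
  - by rewrite swap_tokenR.
  - exact: swap_tokenD.
have [h' ? agree] := IH w h1 pw min1 h1w.
exists h' => // t; rewrite !in_cons !negb_or => /and3P [tu tw tp].
by rewrite agree ?h1off // in_cons negb_or tw.
Qed.

Lemma token_anywhere h v : minimal h -> exists2 h', minimal h' & h' v = None.
Proof.
move=> hmin; have [u hu] := dominating_has_token hmin.1.
have /connectP [p up ->] := G_conn u v.
have e_sub : subrel e e by [].
by have [h' [? ?] _] := move_token e_sub up hmin hu; exists h'.
Qed.

Lemma no_minimal_coloring x y c :
  e x y -> c \in L x -> c \notin L y -> forall h, ~ minimal h.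
Proof.
move=> exy cx cy h hmin.
have [h1 min1 h1x] := token_anywhere x hmin.
have [z exz h1z] := minimal_saturated min1 h1x cx.
have zy : z != y.
  by apply: contraNneq cy => <-; case: min1 => -[h1col _ _] _; apply: h1col h1z.
have zx : z != x by apply: contraTneq exz => ->; rewrite e_irr.
have yx : y != x by apply: contraTneq exy => ->; rewrite e_irr.
have min2 := minimal_swap min1 h1x exz h1z.
have /connectP [p zp yl] : connect (del_vertex e x) z y.
  by apply/negPn/negP => disc; case: (@G_nocut x); exists z, y.
have sub : subrel (del_vertex e x) e by move=> a b /and3P [].
have h2z : swap_token h1 x z z = None by rewrite swap_tokenR.
have [h3 [min3 h3y] agree] := move_token sub zp min2 h2z.
have h3x : h3 x = Some c.
  by rewrite agree ?del_vertex_path_avoids // swap_tokenL.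
rewrite -yl in h3y.
have eyx : e y x by rewrite e_sym.
have := saturated_neighbour_color (minimal_saturated min3 h3y) eyx h3x.
by rewrite (negbTE cy).
Qed.

End FixedTokenCount.

Hypothesis g_col : partial_L_coloring L g.
Hypothesis g_proper : proper_partial_coloring e g.

(* Strong induction on the token count: since g is dominating, lists of
   adjacent vertices are nested. *)
Lemma adjacent_lists_sub x y : e x y -> L x \subset L y.
Proof.
move=> exy; apply/subsetP => c cx; apply/negPn/negP => cy.
suff none : forall k h, #|uncolored h| = k -> ~ dominating h.
  by apply: (none _ g erefl); split.
elim/ltn_ind=> k IH h hk dom.
apply: (no_minimal_coloring _ exy cx cy (conj dom hk)) => h' fewer.
exact: IH fewer h' erefl.
Qed.

End TokenMoves.

Theorem lemma4p3 (T C : finType) (e : rel T)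
  (e_sym : symmetric e) (e_irr : irreflexive e)
  (G_conn : connected_graph e)
  (G_nocut : forall x : T, ~ cut_vertex e x)
  (L : T -> {set C}) (L_deg : degree_list_assignment e L)
  (g : T -> option C) (g_col : partial_L_coloring L g)
  (g_proper : proper_partial_coloring e g) :
  ~ (exists f : T -> C, [/\ L_coloring L f, proper_coloring e f &
        forall a : C, pfiber g a <= fiber f a]) ->
  forall x y : T, L x = L y.
Proof.
move=> no_good x y.
have edge_eq a b : e a b -> L a = L b.
  move=> eab; have eba : e b a by rewrite e_sym.
  have sub := adjacent_lists_sub e_sym e_irr L_deg no_good G_conn G_nocut
    g_col g_proper.
  by apply/eqP; rewrite eqEsubset !sub.
have /connectP [p xp ->] := G_conn x y.
by elim: p x xp => //= w p IH a /andP [/edge_eq -> /IH].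
Qed.
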